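(* Let $k,n$ be integers with $1\leq k\leq n$ and let $G$ be a bipartite graph of order $n$. If $e(G)\leq e(K_{k-1,n-k+1})$, then $\rho(G)\leq \rho(K_{k-1,n-k+1})$.
   Context: Graphs are finite and simple; $e(G)$ is the number of edges and $\rho(G)$ the largest eigenvalue of the adjacency matrix of $G$. $K_{a,b}$ is the complete bipartite graph with parts of sizes $a$ and $b$. *)

From HB Require Import structures.
From mathcomp Require Import all_boot all_order all_algebra.
From mathcomp Require Import reals.
Set Implicit Arguments. Unset Strict Implicit. Unset Printing Implicit Defensive.
Import Order.TTheory GRing.Theory Num.Theory.

Definition simple_graph n (G : rel 'I_n) : Prop :=
  (forall x y, G x y = G y x) /\ (forall x, ~~ G x x).

Definition bipartite n (G : rel 'I_n) : Prop :=
  exists A : {set 'I_n}, forall x y, G x y -> (x \in A) != (y \in A).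

Definition num_edges n (G : rel 'I_n) : nat :=
  #|[set E : {set 'I_n} | [exists x, exists y, G x y && (E == [set x; y])]]|.

Definition adj_mx (R : realType) n (G : rel 'I_n) : 'M[R]_n :=
  \matrix_(i, j) ((G i j)%:R)%R.

Definition largest_eigenvalue (R : realType) n (M : 'M[R]_n) (r : R) : Prop :=
  eigenvalue M r /\ (forall x : R, eigenvalue M x -> x <= r)%R.

Definition Kbip n (a : nat) : rel 'I_n :=
  fun i j => (i < a) != (j < a).
Arguments Kbip : clear implicits.

(* If w is an eigenvector of a bipartite graph G with parts A, B and eigenvalue
   l, then l w_j is the sum of the w_i over the neighbours i of j, so by
   Cauchy-Schwarz l^2 w_j^2 <= deg(j) |w_B|^2 for j in A.  Summing over A gives
   l^2 |w_A|^2 <= e(G) |w_B|^2; adding the symmetric inequality yields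
   l^2 <= e(G).  On the other hand K_{a,b} has the eigenvalue sqrt(ab), and
   e(K_{a,b}) <= ab, hence
   rho(G) <= sqrt e(G) <= sqrt e(K_{k-1,n-k+1}) <= rho(K_{k-1,n-k+1}). *)

From HB Require Import structures.
From mathcomp Require Import all_boot all_order all_algebra.
From mathcomp Require Import reals ring.
Set Implicit Arguments. Unset Strict Implicit. Unset Printing Implicit Defensive.
Import Order.TTheory GRing.Theory Num.Theory.
Local Open Scope ring_scope.

Lemma ler_psum_subset (R : numDomainType) (I : finType) (P Q : pred I) (F : I -> R) :
  (forall i, P i -> Q i) -> (forall i, Q i -> 0 <= F i) ->
  \sum_(i | P i) F i <= \sum_(i | Q i) F i.
Proof.
move=> PQ F_ge0; rewrite [leLHS]big_mkcond [leRHS]big_mkcond /=.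
apply: ler_sum => i _; case: ifP => [/PQ -> // | _].
by case: ifP => // /F_ge0.
Qed.

Section SumOfSquares.
Variables (R : realDomainType) (I : finType).

Lemma cauchy_schwarz_sum (P : pred I) (a b : I -> R) :
  (\sum_(i | P i) a i * b i) ^+ 2 <=
  (\sum_(i | P i) a i ^+ 2) * (\sum_(i | P i) b i ^+ 2).
Proof.
set A := \sum_(i | P i) a i ^+ 2; set B := \sum_(i | P i) b i ^+ 2.
set S := \sum_(i | P i) a i * b i.
have A_ge0 : 0 <= A by apply: sumr_ge0 => i _; exact: sqr_ge0.
have [A0|A_neq0] := eqVneq A 0.
  have a0 i : P i -> a i = 0.
    move=> Pi; apply/eqP; rewrite -sqrf_eq0; apply/eqP.
    by apply: (psumr_eq0P _ A0) => // j _; exact: sqr_ge0.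
  by rewrite /S big1 ?expr0n ?A0 ?mul0r // => i /a0 ->; rewrite mul0r.
have A_gt0 : 0 < A by rewrite lt_def A_neq0.
(* [A] times the Cauchy-Schwarz defect is a sum of squares. *)
have defect : \sum_(i | P i) (S * a i - A * b i) ^+ 2 = A * (A * B - S ^+ 2).
  rewrite (eq_bigr (fun i =>
      S ^+ 2 * a i ^+ 2 - (2 * S * A) * (a i * b i) + A ^+ 2 * b i ^+ 2)) => [|i _];
    last by ring.
  by rewrite big_split sumrB /= -!mulr_sumr -/A -/B -/S; ring.
have : 0 <= A * (A * B - S ^+ 2).
  by rewrite -defect; apply: sumr_ge0 => i _; exact: sqr_ge0.
by rewrite pmulr_rge0 // subr_ge0.
Qed.

Lemma sqr_sum_le_card_sum_sqr (P : pred I) (x : I -> R) :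
  (\sum_(i | P i) x i) ^+ 2 <= #|P|%:R * \sum_(i | P i) x i ^+ 2.
Proof.
have := cauchy_schwarz_sum P x (fun=> 1).
under eq_bigr do rewrite mulr1.
under [X in _ * X]eq_bigr do rewrite expr1n.
by rewrite sumr_const mulrC.
Qed.

End SumOfSquares.

Section EdgeCounting.
Variables (n : nat) (G : rel 'I_n) (P : pred 'I_n).
Hypothesis P_indep : forall i j, G i j -> P j -> ~~ P i.

Lemma sum_indegree_le_num_edges :
  (\sum_(j | P j) #|[pred i | G i j]| <= num_edges G)%N.
Proof.
set D := [set p : 'I_n * 'I_n | P p.1 && G p.2 p.1].
have -> : (\sum_(j | P j) #|[pred i | G i j]| = #|D|)%N.
  under eq_bigr => j _ do rewrite -sum1_card.
  by rewrite pair_big_dep sum1dep_card.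
have f_inj : {in D &, injective (fun p => [set p.1; p.2])}.
  move=> [j i] [j' i']; rewrite !inE /= => /andP[Pj Gij] /andP[Pj' Gij'] eq_ji.
  have Pi := P_indep Gij Pj; have Pi' := P_indep Gij' Pj'.
  have : j \in [set j'; i'] by rewrite -eq_ji set21.
  have : i \in [set j'; i'] by rewrite -eq_ji set22.
  rewrite !inE => /orP[/eqP ij' | /eqP ->]; first by move: Pi; rewrite ij' Pj'.
  case/orP => [/eqP -> // | /eqP ji'].
  by move: Pj; rewrite ji' (negbTE Pi').
rewrite -(card_in_imset f_inj); apply: subset_leq_card.
apply/subsetP => _ /imsetP[[j i] jiD ->]; move: jiD; rewrite !inE /= => /andP[_ Gij].
by apply/existsP; exists i; apply/existsP; exists j; rewrite Gij setUC eqxx.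
Qed.
End EdgeCounting.

Lemma sum_sqr_row_gt0 (R : realDomainType) m (v : 'rV[R]_m) :
  v != 0 -> 0 < \sum_j v 0 j ^+ 2.
Proof.
move=> v_neq0; rewrite lt_def sumr_ge0 ?andbT => [|j _]; last exact: sqr_ge0.
apply: contraNneq v_neq0 => /(psumr_eq0P (fun j _ => sqr_ge0 (v 0 j))) v0.
by apply/eqP/rowP => j; apply/eqP; rewrite mxE -sqrf_eq0 v0.
Qed.

Section AdjacencyEigenvalues.
Variables (R : realType) (n : nat) (G : rel 'I_n).

Lemma mul_row_adj_mx (v : 'rV[R]_n) j :
  (v *m adj_mx R G) 0 j = \sum_(i | G i j) v 0 i.
Proof.
rewrite mxE [RHS]big_mkcond /=; apply: eq_bigr => i _.
by rewrite mxE; case: (G i j); rewrite ?mulr1 ?mulr0.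
Qed.

Lemma adj_mx_eigenvalueP (lam : R) :
  eigenvalue (adj_mx R G) lam <->
  exists2 v : 'rV[R]_n, v != 0 & forall j, \sum_(i | G i j) v 0 i = lam * v 0 j.
Proof.
split=> [/eigenvalueP[v vG v_neq0] | [v v_neq0 vG]].
  by exists v => // j; rewrite -mul_row_adj_mx vG mxE.
by apply/eigenvalueP; exists v => //; apply/rowP => j; rewrite mul_row_adj_mx vG mxE.
Qed.

Lemma edgeless_eigenvalue0 : (0 < n)%N -> (forall i j, ~~ G i j) ->
  eigenvalue (adj_mx R G) 0.
Proof.
move=> n_gt0 G0; apply/adj_mx_eigenvalueP; exists (const_mx 1).
  by apply/eqP => /rowP/(_ (Ordinal n_gt0)); rewrite !mxE => /eqP; rewrite oner_eq0.
by move=> j; rewrite mul0r big_pred0 // => i; exact/negbTE.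
Qed.

Lemma eigenvector_sqr_side_le (lam : R) (w : 'I_n -> R) (P : pred 'I_n) :
  (forall i j, G i j -> P j -> ~~ P i) ->
  (forall j, \sum_(i | G i j) w i = lam * w j) ->
  lam ^+ 2 * \sum_(j | P j) w j ^+ 2 <=
  (num_edges G)%:R * \sum_(i | ~~ P i) w i ^+ 2.
Proof.
move=> P_indep w_eig; set Y := \sum_(i | ~~ P i) w i ^+ 2.
have Y_ge0 : 0 <= Y by apply: sumr_ge0 => i _; exact: sqr_ge0.
apply: (@le_trans _ _ ((\sum_(j | P j) #|[pred i | G i j]|)%:R * Y)).
  rewrite natr_sum mulr_sumr mulr_suml; apply: ler_sum => j Pj.
  rewrite -exprMn -w_eig; apply: le_trans (sqr_sum_le_card_sum_sqr _ _) _.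
  rewrite ler_wpM2l ?ler0n //; apply: ler_psum_subset => [i Gij | i _].
    exact: P_indep Gij Pj.
  exact: sqr_ge0.
by rewrite ler_wpM2r // ler_nat sum_indegree_le_num_edges.
Qed.

Lemma bipartite_eigenvalue_sqr_le (lam : R) :
  bipartite G -> eigenvalue (adj_mx R G) lam -> lam ^+ 2 <= (num_edges G)%:R.
Proof.
move=> [A A_cut] /adj_mx_eigenvalueP[v v_neq0 v_eig].
have A_indep i j : G i j -> j \in A -> i \notin A.
  by move/A_cut; case: (i \in A); case: (j \in A).
have Ac_indep i j : G i j -> j \notin A -> ~~ (i \notin A).
  by move/A_cut; case: (i \in A); case: (j \in A).
have leX := eigenvector_sqr_side_le A_indep v_eig.
have leY := eigenvector_sqr_side_le Ac_indep v_eig.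
rewrite (eq_bigl _ _ (fun i => negbK (i \in A))) in leY.
rewrite -(ler_pM2r (sum_sqr_row_gt0 v_neq0)) (bigID (fun j => j \in A)) /=.
by rewrite !mulrDr [leRHS]addrC lerD.
Qed.

Lemma bipartite_eigenvalue_le_sqrt (lam : R) :
  bipartite G -> eigenvalue (adj_mx R G) lam -> lam <= Num.sqrt (num_edges G)%:R.
Proof.
move=> G_bip lam_eig; apply: le_trans (ler_norm lam) _.
by rewrite -sqrtr_sqr ler_sqrt ?ler0n ?bipartite_eigenvalue_sqr_le.
Qed.

End AdjacencyEigenvalues.

Section CompleteBipartite.
Variables (n a : nat).

Definition Kbip_part : {set 'I_n} := [set i : 'I_n | (i < a)%N].

Lemma KbipE i j : Kbip n a i j = ((i \in Kbip_part) != (j \in Kbip_part)).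
Proof. by rewrite !inE. Qed.

Lemma num_edges_Kbip :
  (num_edges (Kbip n a) <= #|Kbip_part| * #|~: Kbip_part|)%N.
Proof.
rewrite -cardsX; set f := fun p : 'I_n * 'I_n => [set p.1; p.2].
apply: leq_trans (leq_imset_card f _); apply: subset_leq_card.
apply/subsetP => _ /[!inE] /existsP[x /existsP[y /andP[Kxy /eqP ->]]].
move: Kxy; rewrite KbipE.
case: (boolP (x \in _)) => xA; case: (boolP (y \in _)) => yA //= _.
  by apply/imsetP; exists (x, y); rewrite // in_setX in_setC xA yA.
by apply/imsetP; exists (y, x); rewrite /f 1?setUC // in_setX in_setC xA yA.
Qed.

Lemma Kbip_eigenvalue (R : realType) : (0 < n)%N ->
  eigenvalue (adj_mx R (Kbip n a)) (Num.sqrt (#|Kbip_part| * #|~: Kbip_part|)%:R).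
Proof.
move=> n_gt0; set A := Kbip_part; set p := #|A|; set q := #|~: A|.
have [pq0 | pq_neq0] := eqVneq (p * q)%N 0%N.
  rewrite pq0 sqrtr0; apply: edgeless_eigenvalue0 => // i j.
  move/eqP: pq0; rewrite muln_eq0 !cards_eq0 KbipE -/A => /orP[] /eqP A0.
    by rewrite A0 !inE.
  by rewrite -[A]setCK A0 !inE.
have [p_gt0 q_gt0] : (0 < p)%N /\ (0 < q)%N.
  by apply/andP; move: pq_neq0; rewrite muln_eq0 negb_or !lt0n.
have [i0 i0A] : exists i, i \in A by apply/card_gt0P.
set sp := Num.sqrt (p%:R : R); set sq := Num.sqrt (q%:R : R).
pose v := \row_i (if i \in A then sq else sp).
have sum_v (B : {set 'I_n}) c :
    {in B, forall i, v 0 i = c} -> \sum_(i in B) v 0 i = c *+ #|B|.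
  by move=> vB; rewrite (eq_bigr (fun=> c)) // sumr_const.
apply/adj_mx_eigenvalueP; exists v.
  apply/eqP => /rowP/(_ i0); rewrite !mxE i0A => /eqP.
  by rewrite sqrtr_eq0 lern0 => /eqP q0; rewrite q0 in q_gt0.
move=> j; rewrite natrM sqrtrM ?ler0n // -/sp -/sq mxE.
case: (boolP (j \in A)) => jA.
  rewrite (eq_bigl (fun i => i \in ~: A)) => [|i]; last first.
    by rewrite KbipE -/A jA in_setC; case: (i \in A).
  rewrite (sum_v _ sp) => [|i]; last by rewrite in_setC mxE => /negbTE ->.
  by rewrite -mulrA -expr2 sqr_sqrtr ?ler0n // mulr_natr.
rewrite (eq_bigl (fun i => i \in A)) => [|i]; last first.
  by rewrite KbipE -/A (negbTE jA); case: (i \in A).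
rewrite (sum_v _ sq) => [|i]; last by rewrite mxE => ->.
by rewrite mulrAC -expr2 sqr_sqrtr ?ler0n // mulr_natl.
Qed.
End CompleteBipartite.

Theorem proposition5 (R : realType) (n k : nat) (G : rel 'I_n) (rhoG rhoK : R) :
  (1 <= k <= n)%N ->
  simple_graph G ->
  bipartite G ->
  (num_edges G <= num_edges (Kbip n k.-1))%N ->
  largest_eigenvalue (adj_mx R G) rhoG ->
  largest_eigenvalue (adj_mx R (Kbip n k.-1)) rhoK ->
  (rhoG <= rhoK)%R.
Proof.
move=> /andP[k_gt0 k_le_n] _ G_bip eG [rhoG_eig _] [_ rhoK_max].
have n_gt0 : (0 < n)%N := leq_trans k_gt0 k_le_n.
apply: le_trans (bipartite_eigenvalue_le_sqrt G_bip rhoG_eig) _.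
apply: le_trans _ (rhoK_max _ (Kbip_eigenvalue k.-1 R n_gt0)).
by rewrite ler_sqrt ?ler0n // ler_nat (leq_trans eG) ?num_edges_Kbip.
Qed.
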